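(* Let $\{G_i\}$ be a family of connected graphs with common induced subgraph $J$, embedded as $J_i\subseteq G_i$, such that $\{(G_i|J_i)\}$ is isometric, and let $H=\amalg\{(G_i|J_i)\}$. If, for each $i$, $A_i\subseteq V(G_i)$ is a local metric set for $G_i$, then $\bigcup_i A_i$ (viewed as a subset of $V(H)$) is a local metric set for $H$.
   Context: $d_G$ is shortest-path distance in $G$. A vertex $w$ distinguishes an edge $uv$ of $G$ if $d_G(w,u)\neq d_G(w,v)$; a local metric set of $G$ is a set $B\subseteq V(G)$ such that every edge of $G$ is distinguished by some vertex of $B$. $J$ is a common induced subgraph of each $G_i$ via injective maps $\iota_i:V(J)\to V(G_i)$ with $\iota_i(x)\iota_i(y)\in E(G_i)$ iff $xy\in E(J)$; $J_i$ is the induced image, $x^i=\iota_i(x)$. $H=\amalg\{(G_i|J_i)\}$ is obtained from the disjoint union of the $G_i$ by identifying, for each $x\in V(J)$, all $x^i$ into one vertex; each $G_i$ is regarded as a subgraph of $H$. The family is isometric if $d_{G_i}(a^i,b^i)=d_{G_j}(a^j,b^j)$ for all $i,j$ and $a,b\in V(J)$. *)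

From mathcomp Require Import all_boot.
Set Implicit Arguments. Unset Strict Implicit. Unset Printing Implicit Defensive.

Definition ball (T : finType) (e : rel T) (k : nat) (u : T) : {set T} :=
  iter k (fun S => S :|: [set y | [exists x in S, e x y]]) [set u].

(* shortest-path distance d_G(u,v); for unreachable v it takes the
   sentinel value #|T| (never used for connected graphs). *)
Definition gdist (T : finType) (e : rel T) (u v : T) : nat :=
  \big[minn/#|T|]_(0 <= k < #|T| | v \in ball e k u) k.

Definition connected_graph (T : finType) (e : rel T) : Prop :=
  forall u v : T, connect e u v.

Definition distinguishes (T : finType) (e : rel T) (w u v : T) : Prop :=
  gdist e w u <> gdist e w v.

Definition local_metric_set (T : finType) (e : rel T) (B : {set T}) : Prop :=
  forall u v : T, e u v -> exists2 w, w \in B & distinguishes e w u v.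

(* Amalgamation H = \amalg (G_i | J_i).  Its vertex set is
   V(J) + { (i, v) | v in V(G_i) \ J_i }: each x in V(J) is the single
   vertex obtained by identifying all copies x^i. *)
Section Amalgam.
Variables (I : finType) (V : I -> finType) (VJ : finType)
  (e : forall i, rel (V i)) (iota : forall i, VJ -> V i).

Definition pickJ (i : I) (v : V i) : option VJ := [pick x | iota i x == v].

Definition restV (i : I) : finType := {v : V i | pickJ v == None}.

Definition amalgV : finType := (VJ + {i : I & restV i})%type.

Definition amalg_inj (i : I) (v : V i) : amalgV :=
  (match pickJ v as o return pickJ v = o -> amalgV with
   | Some x => fun _ => inl x
   | None => fun h => inr (Tagged restV (exist (fun w => pickJ w == None) v (introT eqP h)))
   end) erefl.

Definition amalgE : rel amalgV := fun a b =>
  [exists i : I, [exists u : V i, [exists w : V i,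
     [&& e u w, amalg_inj u == a & amalg_inj w == b]]]].

End Amalgam.

From mathcomp Require Import all_boot.
Set Implicit Arguments. Unset Strict Implicit. Unset Printing Implicit Defensive.

(* Each [G_i] sits isometrically in [H]; since an edge of [H] is an edge of
   some [G_j] and local metric sets only look at edges, a vertex of [A_j]
   distinguishing an edge in [G_j] still distinguishes it in [H].
   Isometry: a walk of length [k] in [H] from a vertex [p] of [G_i] is followed
   segment by segment; while it runs inside [G_i] it is a walk of [G_i], and
   once it enters another [G_j] through a vertex [x] of [J] the distance from
   [p] is tracked as [d_i(p, x) + d_j(x, .)], which the isometry hypothesis
   converts back to a distance in [G_i] whenever the walk re-enters [J]. *)

Lemma bigminn_le (I : eqType) (r : seq I) (P : pred I) (F : I -> nat) m j :
  j \in r -> P j -> \big[minn/m]_(i <- r | P i) F i <= F j.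
Proof.
elim: r => // i r IHr; rewrite in_cons big_cons => /orP[/eqP<- -> | jr Pj].
  exact: geq_minl.
by case: ifP => _; rewrite ?geq_min IHr ?orbT.
Qed.

Lemma bigminn_le_idx (I : Type) (r : seq I) (P : pred I) (F : I -> nat) m :
  \big[minn/m]_(i <- r | P i) F i <= m.
Proof.
elim: r => [|i r IHr]; rewrite ?big_nil // big_cons.
by case: ifP; rewrite ?geq_min IHr ?orbT.
Qed.

Section GraphDistance.
Variables (T : finType) (e : rel T).

Lemma ball0 u : ball e 0 u = [set u].
Proof. by []. Qed.

Lemma ballS k u :
  ball e k.+1 u = ball e k u :|: [set y | [exists x in ball e k u, e x y]].
Proof. by []. Qed.

Lemma ball_ind (P : nat -> T -> Prop) u :
    P 0 u -> (forall k x, P k x -> P k.+1 x) ->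
    (forall k x y, P k x -> e x y -> P k.+1 y) ->
  forall k v, v \in ball e k u -> P k v.
Proof.
move=> P0 PS Pe; elim=> [|k IHk] v; first by rewrite ball0 inE => /eqP->.
rewrite ballS in_setU inE => /orP[/IHk/PS // | /existsP[x /andP[/IHk Px xv]]].
exact: Pe Px xv.
Qed.

Lemma ball_edge k u x y : x \in ball e k u -> e x y -> y \in ball e k.+1 u.
Proof.
move=> xk xy; rewrite ballS in_setU inE; apply/orP; right.
by apply/existsP; exists x; rewrite xk.
Qed.

Lemma ball_trans k m u v w :
  v \in ball e k u -> w \in ball e m v -> w \in ball e (k + m) u.
Proof.
move=> vk; apply: (ball_ind (P := fun m w => w \in ball e (k + m) u)).
- by rewrite addn0.
- by move=> n x; rewrite addnS ballS in_setU => ->.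
- by move=> n x y; rewrite addnS; apply: ball_edge.
Qed.

Lemma ball_path u s : path e u s -> last u s \in ball e (size s) u.
Proof.
elim: s u => [|x s IHs] u; first by rewrite inE.
case/andP=> ux /IHs; apply: (@ball_trans 1).
by apply: ball_edge ux; rewrite ball0 inE.
Qed.

Lemma gdist_le k u v : v \in ball e k u -> gdist e u v <= k.
Proof.
move=> vk; have [kT|] := ltnP k #|T|; last exact/leq_trans/bigminn_le_idx.
by apply: bigminn_le; rewrite ?mem_index_iota.
Qed.

Lemma mem_ball_gdist u v : gdist e u v < #|T| -> v \in ball e (gdist e u v) u.
Proof.
rewrite /gdist; elim/big_ind: _ => [|m n mP nP | //]; first by rewrite ltnn.
by rewrite /minn; case: ifP.
Qed.

Lemma gdist_lt_card u v : connect e u v -> gdist e u v < #|T|.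
Proof.
case/connectP=> s /shortenP[s' us' uniq_s' _] ->.
apply: leq_ltn_trans (gdist_le (ball_path us')) _.
by have := max_card (mem (u :: s')); rewrite (card_uniqP uniq_s').
Qed.

Lemma gdist_refl u : gdist e u u = 0.
Proof. by apply/eqP; rewrite -leqn0 gdist_le // ball0 inE. Qed.

Lemma gdist_triangle u v w : connect e u v -> connect e v w ->
  gdist e u w <= gdist e u v + gdist e v w.
Proof.
move=> /gdist_lt_card/mem_ball_gdist uv /gdist_lt_card/mem_ball_gdist vw.
exact/gdist_le/(ball_trans uv vw).
Qed.

Lemma gdist_edge u v w : connect e u v -> e v w -> gdist e u w <= (gdist e u v).+1.
Proof. by move=> /gdist_lt_card/mem_ball_gdist uv vw; exact/gdist_le/(ball_edge uv vw). Qed.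

End GraphDistance.

Section AmalgamInjection.
Variables (I : finType) (V : I -> finType) (VJ : finType) (iota : forall i, VJ -> V i).

Local Notation inj := (amalg_inj iota).

Variant amalg_inj_spec i (v : V i) : amalgV iota -> Prop :=
  | AmalgInjShared x of iota i x = v : amalg_inj_spec v (inl x)
  | AmalgInjPrivate (r : restV iota i) of val r = v :
      amalg_inj_spec v (inr (Tagged (@restV I V VJ iota) r)).

Lemma amalg_injP i (v : V i) : amalg_inj_spec v (inj v).
Proof.
rewrite /amalg_inj; move: (erefl (pickJ iota v)).
case: {2 3}(pickJ iota v) => [x|] pick_v; constructor => //.
by move: pick_v; rewrite /pickJ; case: pickP => // y /eqP ? [<-].
Qed.

Lemma amalg_inj_inj i : injective (@inj i).
Proof.
move=> v w; case: amalg_injP => [x <- | r <-]; case: amalg_injP => [y <- | s <-] //.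
  by case=> ->.
by move=> [] rs; rewrite (eq_from_Tagged rs).
Qed.

Lemma amalg_inj_shared i j (v : V i) (w : V j) :
  i != j -> inj v = inj w -> exists x, iota i x = v /\ iota j x = w.
Proof.
move=> ij; case: amalg_injP => [x <- | r _]; case: amalg_injP => [y <- | s _] //.
  by case=> <-; exists x.
move=> /(congr1 (fun a => if a is inr t then tag t else i)) /= ji.
by rewrite ji eqxx in ij.
Qed.

End AmalgamInjection.

Section AmalgamDistance.
Variables (I : finType) (V : I -> finType) (VJ : finType)
  (e : forall i, rel (V i)) (iota : forall i, VJ -> V i).
Arguments e : clear implicits.
Hypothesis connected_e : forall i : I, connected_graph (e i).
Hypothesis isometric_iota : forall (i j : I) (a b : VJ),
  gdist (e i) (iota i a) (iota i b) = gdist (e j) (iota j a) (iota j b).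

Local Notation inj := (amalg_inj iota).
Local Notation E := (@amalgE I V VJ e iota).

Lemma amalgE_inj i (u w : V i) : e i u w -> E (inj u) (inj w).
Proof.
move=> uw; apply/existsP; exists i; apply/existsP; exists u.
by apply/existsP; exists w; rewrite uw !eqxx.
Qed.

Lemma ball_amalg_inj i (p q : V i) k :
  q \in ball (e i) k p -> inj q \in ball E k (inj p).
Proof.
apply: (ball_ind (P := fun k q => inj q \in ball E k (inj p))).
- by rewrite ball0 inE.
- by move=> n x; rewrite ballS in_setU => ->.
- by move=> n x y xn /amalgE_inj; apply: ball_edge.
Qed.

Definition amalg_within i (p : V i) k (b : amalgV iota) : Prop :=
  (forall w : V i, inj w = b -> gdist (e i) p w <= k) /\
  (forall j (v : V j), j != i -> inj v = b ->
     exists x, gdist (e i) p (iota i x) + gdist (e j) (iota j x) v <= k).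

Lemma amalg_withinS i (p : V i) k b : amalg_within p k b -> amalg_within p k.+1 b.
Proof.
case=> home away; split=> [w /home/leqW // | j v ji /(away j v ji)[x xk]].
by exists x; apply: leqW.
Qed.

Lemma amalg_within_home i (p w : V i) k :
  gdist (e i) p w <= k -> amalg_within p k (inj w).
Proof.
move=> pw; split=> [w' /amalg_inj_inj -> // | j v ji /(amalg_inj_shared ji)[x [xv xw]]].
by exists x; rewrite xv xw gdist_refl addn0.
Qed.

Lemma amalg_within_away i (p : V i) j (w : V j) x k : j != i ->
  gdist (e i) p (iota i x) + gdist (e j) (iota j x) w <= k ->
  amalg_within p k (inj w).
Proof.
move=> ji xw.
have reach y : iota j y = w -> gdist (e i) p (iota i y) <= k.
  move=> yw; move: xw; rewrite -yw (isometric_iota j i); apply: leq_trans.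
  by apply: gdist_triangle; apply: connected_e.
split=> [w' /esym /(amalg_inj_shared ji)[y [yw <-]] | j' v j'i]; first exact: reach.
case: (eqVneq j' j) => [ej | j'j]; first by subst j' => /amalg_inj_inj ->; exists x.
by case/(amalg_inj_shared j'j)=> y [<- yw]; exists y; rewrite gdist_refl addn0 reach.
Qed.

Lemma amalg_within_edge i (p : V i) k a b :
  amalg_within p k a -> E a b -> amalg_within p k.+1 b.
Proof.
case=> home away /existsP[j /existsP[u /existsP[w /and3P[uw /eqP ua /eqP <-]]]].
case: (eqVneq j i) => [ji | ji]; first subst j.
  apply/amalg_within_home/(leq_trans (gdist_edge (connected_e p u) uw)).
  by rewrite ltnS home.
case: (away j u ji ua) => x xu; apply: (amalg_within_away ji (x := x)).
apply: leq_trans (leq_add (leqnn _) (gdist_edge (connected_e _ u) uw)) _.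
by rewrite addnS ltnS.
Qed.

Lemma gdist_amalg_inj i (p q : V i) : gdist E (inj p) (inj q) = gdist (e i) p q.
Proof.
have pq := gdist_lt_card (connected_e p q).
have le_pq : gdist E (inj p) (inj q) <= gdist (e i) p q.
  exact/gdist_le/ball_amalg_inj/mem_ball_gdist.
have /mem_ball_gdist qE : gdist E (inj p) (inj q) < #|amalgV iota|.
  by apply: leq_ltn_trans le_pq (leq_trans pq (leq_card _ (@amalg_inj_inj _ _ _ _ i))).
have start : amalg_within p 0 (inj p) by apply: amalg_within_home; rewrite gdist_refl.
have [home _] := ball_ind (P := amalg_within p) start (@amalg_withinS _ p)
  (@amalg_within_edge _ p) qE.
by apply/eqP; rewrite eqn_leq le_pq home.
Qed.

End AmalgamDistance.

Theorem lemma4 (I : finType) (V : I -> finType) (VJ : finType)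
  (e : forall i, rel (V i)) (eJ : rel VJ) (iota : forall i, VJ -> V i)
  (A : forall i, {set V i}) :
  (* each G_i is a connected simple graph *)
  (forall i, symmetric (e i)) ->
  (forall i, irreflexive (e i)) ->
  (forall i, connected_graph (e i)) ->
  (* J is a common induced subgraph via injective maps iota_i *)
  (forall i, injective (iota i)) ->
  (forall i x y, e i (iota i x) (iota i y) = eJ x y) ->
  (* the family is isometric *)
  (forall i j a b, gdist (e i) (iota i a) (iota i b) = gdist (e j) (iota j a) (iota j b)) ->
  (* each A_i is a local metric set of G_i *)
  (forall i, local_metric_set (e i) (A i)) ->
  local_metric_set (@amalgE I V VJ e iota)
    (\bigcup_(i : I) [set @amalg_inj I V VJ iota i a | a in A i]).
Proof.
move=> _ _ connected_e _ _ isometric_iota metric_A.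
move=> _ _ /existsP[i /existsP[u /existsP[w /and3P[uw /eqP <- /eqP <-]]]].
have [a Aa a_uw] := metric_A i u w uw.
exists (amalg_inj iota a); first by apply/bigcupP; exists i => //; apply: imset_f.
by rewrite /distinguishes !(gdist_amalg_inj connected_e isometric_iota).
Qed.
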